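(* In the linear setting described in the context, for every $1\le t\le T$, $$\|\overline{\mathbf q}_t-\mathbf x_t\|_2^2\le\|\boldsymbol\theta_{t-1}\cdots\boldsymbol\theta_0\|_2^2\Big(\alpha^{2t}\|\mathbf z^\perp\|_2^2+\|\mathbf z^\parallel\|_2^2+\gamma_t\|\mathbf z\|_2^2\big(\gamma_t\alpha^2(1-\alpha^{t-1})^2+2(\alpha-\alpha^t)\big)\Big),$$ where $\gamma_t=\max_{0\le s\le t}\big(1+\kappa(\overline{\boldsymbol\theta}_s)^2\big)\|\mathbf I-\overline{\boldsymbol\theta}_s^T\overline{\boldsymbol\theta}_s\|_2$ with $\overline{\boldsymbol\theta}_0=\mathbf I$ and $\overline{\boldsymbol\theta}_s=\boldsymbol\theta_{s-1}\cdots\boldsymbol\theta_0$. Moreover, if all $\boldsymbol\theta_t$ are orthogonal matrices, then $$\|\overline{\mathbf q}_t-\mathbf x_t\|_2^2=\alpha^{2t}\|\mathbf z^\perp\|_2^2+\|\mathbf z^\parallel\|_2^2.$$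
   Context: Linear setting: fix integers $1\le r\le d$, $T\ge1$, a control regularization constant $c>0$, and $\alpha=\frac{c}{1+c}$. For $t=0,\dots,T$, $Z^t\subset\mathbb{R}^d$ is an $r$-dimensional linear subspace (the tangent space of the $t$-th embedding manifold), $\mathbf P_t$ is the orthogonal projection onto $Z^t$, $\mathbf Q_t=\mathbf I-\mathbf P_t$, and $\mathbf K_t=(c\mathbf I+\mathbf Q_t^T\mathbf Q_t)^{-1}\mathbf Q_t^T\mathbf Q_t$. For $t=0,\dots,T-1$, $\boldsymbol\theta_t\in\mathbb{R}^{d\times d}$ is invertible with $\boldsymbol\theta_tZ^t=Z^{t+1}$. The clean trajectory is $\mathbf x_0\in Z^0$, $\mathbf x_{t+1}=\boldsymbol\theta_t\mathbf x_t$. Given a perturbation $\mathbf z\in\mathbb{R}^d$, write $\mathbf z^\parallel=\mathbf P_0\mathbf z$ and $\mathbf z^\perp=\mathbf z-\mathbf P_0\mathbf z$; the controlled perturbed trajectory is $\overline{\mathbf q}_0=\mathbf x_0+\mathbf z$, $\overline{\mathbf q}_{t+1}=\boldsymbol\theta_t(\mathbf I-\mathbf K_t)\overline{\mathbf q}_t$ (i.e. $\overline{\mathbf q}_{t+1}=\boldsymbol\theta_t(\overline{\mathbf q}_t+\mathbf u_t)$ with the feedback control $\mathbf u_t=-\mathbf K_t\overline{\mathbf q}_t$ minimizing $\frac12\|\mathbf Q_t(\overline{\mathbf q}_t+\mathbf u)\|_2^2+\frac c2\|\mathbf u\|_2^2$). $\|\cdot\|_2$ is the Euclidean norm on vectors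 and the spectral norm on matrices; $\kappa(\mathbf A)=\|\mathbf A\|_2\|\mathbf A^{-1}\|_2$. *)

From HB Require Import structures.
From mathcomp Require Import all_boot all_order all_algebra.
From mathcomp Require Import boolp classical_sets reals.
Set Implicit Arguments. Unset Strict Implicit. Unset Printing Implicit Defensive.
Import Order.TTheory GRing.Theory Num.Theory.
Local Open Scope ring_scope.

Section LinDefs.
Variable R : realType.
Variable d : nat.

Definition vnorm (v : 'cV[R]_d) : R := Num.sqrt (\sum_(i < d) v i 0 ^+ 2).

Definition specnorm (A : 'M[R]_d) : R :=
  sup [set vnorm (A *m v) | v in [set v : 'cV[R]_d | vnorm v <= 1]]%classic.

Definition kappa (A : 'M[R]_d) : R := specnorm A * specnorm (invmx A).

(* P is the orthogonal projection onto the row space of Z (a subspace of R^d,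
   vectors identified with their transposes) *)
Definition is_orth_proj (P Z : 'M[R]_d) : Prop :=
  P^T = P /\ P *m P = P /\ (P == Z)%MS.

Definition Qm (P : 'M[R]_d) : 'M[R]_d := 1%:M - P.
Definition Km (c : R) (P : 'M[R]_d) : 'M[R]_d :=
  invmx (c%:M + (Qm P)^T *m Qm P) *m ((Qm P)^T *m Qm P).

Fixpoint xtraj (theta : nat -> 'M[R]_d) (x0 : 'cV[R]_d) (t : nat) : 'cV[R]_d :=
  match t with
  | 0 => x0
  | t'.+1 => theta t' *m xtraj theta x0 t'
  end.

Fixpoint qtraj (c : R) (theta P : nat -> 'M[R]_d) (x0 z : 'cV[R]_d) (t : nat)
  : 'cV[R]_d :=
  match t with
  | 0 => x0 + z
  | t'.+1 => theta t' *m ((1%:M - Km c (P t')) *m qtraj c theta P x0 z t')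
  end.

Fixpoint thetabar (theta : nat -> 'M[R]_d) (s : nat) : 'M[R]_d :=
  match s with
  | 0 => 1%:M
  | s'.+1 => theta s' *m thetabar theta s'
  end.

Definition gamma (theta : nat -> 'M[R]_d) (t : nat) : R :=
  \big[Num.max/0]_(s < t.+1)
    ((1 + kappa (thetabar theta s) ^+ 2) *
     specnorm (1%:M - (thetabar theta s)^T *m thetabar theta s)).

End LinDefs.

From HB Require Import structures.
From mathcomp Require Import all_boot all_order all_algebra.
From mathcomp Require Import boolp classical_sets reals.
From mathcomp Require Import ring lra.
Import Order.TTheory GRing.Theory Num.Theory.
Local Open Scope ring_scope.

Set Implicit Arguments.
Unset Strict Implicit.
Unset Printing Implicit Defensive.

(* For an orthogonal projection P the feedback is 1 - K = alpha + (1 - alpha) P.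
   It fixes the clean trajectory, which stays in the tangent spaces, and scales
   the normal part of the error by alpha.  Pulled back along thetabar_t, the
   error is therefore z_par + alpha^t z_perp + w_t, where w_t lies in Z^0 and
   collects, with weights (1 - alpha) alpha^s, the vectors
   thetabar_s^-1 P_s thetabar_s z_perp: the part of the normal perturbation
   that the non-orthogonality of thetabar_s turns tangent.  Such a vector is
   orthogonal to z_perp, and with Cauchy-Schwarz this bounds its norm by
   (1 + kappa^2) |I - thetabar_s^T thetabar_s| |z_perp|.  The bound vanishes
   for orthogonal thetabar_s and in general sums to
   |w_t| <= gamma_t |z| (alpha - alpha^t). *)

Section Euclidean.
Variables (R : realType) (d : nat).
Implicit Types (u v w : 'cV[R]_d) (A : 'M[R]_d).

Definition dot u w : R := (u^T *m w) 0 0.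

Lemma dotC u w : dot u w = dot w u.
Proof. by rewrite /dot -[u^T *m w]trmxK trmx_mul trmxK mxE. Qed.

Lemma dotDr u v w : dot u (v + w) = dot u v + dot u w.
Proof. by rewrite /dot mulmxDr mxE. Qed.

Lemma dotDl u v w : dot (v + w) u = dot v u + dot w u.
Proof. by rewrite dotC dotDr !(dotC u). Qed.

Lemma dotZr k u w : dot u (k *: w) = k * dot u w.
Proof. by rewrite /dot -scalemxAr mxE. Qed.

Lemma dotZl k u w : dot (k *: u) w = k * dot u w.
Proof. by rewrite dotC dotZr dotC. Qed.

Lemma dotBr u v w : dot u (v - w) = dot u v - dot u w.
Proof. by rewrite dotDr -scaleN1r dotZr mulN1r. Qed.

Lemma dotNl u w : dot (- u) w = - dot u w.
Proof. by rewrite -scaleN1r dotZl mulN1r. Qed.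

Lemma dot0r u : dot u 0 = 0.
Proof. by rewrite /dot mulmx0 mxE. Qed.

Lemma dot_mulmxl A u w : dot (A *m u) w = dot u (A^T *m w).
Proof. by rewrite /dot trmx_mul mulmxA. Qed.

Lemma vnorm_ge0 u : 0 <= vnorm u.
Proof. exact: sqrtr_ge0. Qed.

Lemma vnorm_sq u : vnorm u ^+ 2 = dot u u.
Proof.
rewrite /vnorm sqr_sqrtr; last by apply: sumr_ge0 => i _; rewrite sqr_ge0.
by rewrite /dot mxE; apply: eq_bigr => i _; rewrite mxE expr2.
Qed.

Lemma vnorm_eq0 u : (vnorm u == 0) = (u == 0).
Proof.
apply/idP/eqP => [|->]; last first.
  by rewrite /vnorm big1 ?sqrtr0 // => i _; rewrite mxE expr0n.
rewrite sqrtr_eq0 => sum_le0.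
have sum_eq0 : \sum_(k < d) u k 0 ^+ 2 = 0.
  by apply/eqP; rewrite eq_le sum_le0 sumr_ge0 // => k _; rewrite sqr_ge0.
apply/matrixP => i j; rewrite mxE (ord1 j); apply/eqP; rewrite -sqrf_eq0.
by rewrite (psumr_eq0P _ sum_eq0) // => k _; rewrite sqr_ge0.
Qed.

Lemma vnorm0 : vnorm (0 : 'cV[R]_d) = 0.
Proof. by apply/eqP; rewrite vnorm_eq0. Qed.

Lemma vnormZ k u : vnorm (k *: u) = `|k| * vnorm u.
Proof.
apply/eqP; rewrite -(eqrXn2 (n := 2)) ?mulr_ge0 ?vnorm_ge0 //.
by rewrite exprMn !vnorm_sq dotZl dotZr mulrA -expr2 real_normK ?num_real.
Qed.

Lemma cauchy_schwarz u w : dot u w <= vnorm u * vnorm w.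
Proof.
have [->|w_neq0] := eqVneq w 0; first by rewrite dot0r vnorm0 mulr0.
have [->|u_neq0] := eqVneq u 0; first by rewrite dotC dot0r vnorm0 mul0r.
set a := vnorm w; set b := vnorm u.
have a_gt0 : 0 < a by rewrite lt0r vnorm_eq0 w_neq0 vnorm_ge0.
have b_gt0 : 0 < b by rewrite lt0r vnorm_eq0 u_neq0 vnorm_ge0.
have ab_gt0 : 0 < a * b by rewrite mulr_gt0.
have := sqr_ge0 (vnorm (a *: u - b *: w)).
rewrite vnorm_sq dotBr !dotDl !dotNl !dotZl !dotZr -!vnorm_sq.
rewrite (dotC w u) -/a -/b => sq_ge0.
by rewrite -(ler_pM2l ab_gt0); nra.
Qed.

Lemma normr_dot_le u w : `|dot u w| <= vnorm u * vnorm w.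
Proof.
rewrite ler_norml cauchy_schwarz andbT lerNl -dotNl.
apply: le_trans (cauchy_schwarz _ _) _.
by rewrite -scaleN1r vnormZ normrN1 mul1r.
Qed.

Lemma vnormD_le u w : vnorm (u + w) <= vnorm u + vnorm w.
Proof.
rewrite -(ler_pXn2r (n := 2)) ?nnegrE ?addr_ge0 ?vnorm_ge0 //.
rewrite vnorm_sq dotDl !dotDr sqrrD -!vnorm_sq (dotC w u).
by have := cauchy_schwarz u w; lra.
Qed.

Lemma vnorm_mulmx_bounded A :
  exists2 F : R, 0 <= F & forall v, vnorm (A *m v) ^+ 2 <= F * vnorm v ^+ 2.
Proof.
exists (\sum_(i < d) vnorm (row i A)^T ^+ 2) => [|v].
  by apply: sumr_ge0 => i _; rewrite sqr_ge0.
rewrite [in leLHS]vnorm_sq /dot mxE mulr_suml; apply: ler_sum => i _.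
have -> : (A *m v)^T 0 i * (A *m v) i 0 = dot (row i A)^T v ^+ 2.
  rewrite expr2 mxE; congr (_ * _); rewrite /dot !mxE;
    by apply: eq_bigr => j _; rewrite !mxE.
rewrite -exprMn -real_normK ?num_real //.
rewrite lerXn2r ?nnegrE ?mulr_ge0 ?vnorm_ge0 //.
exact: normr_dot_le.
Qed.

End Euclidean.

Section SpectralNorm.
Variables (R : realType) (d : nat).
Implicit Types (A : 'M[R]_d) (v : 'cV[R]_d).

Lemma specnorm_has_sup A :
  has_sup [set vnorm (A *m v) | v in [set v : 'cV[R]_d | vnorm v <= 1]]%classic.
Proof.
split; first by exists (vnorm (A *m 0)), 0 => //=; rewrite vnorm0 ler01.
have [F F0 HF] := vnorm_mulmx_bounded A.
exists (1 + F) => _ [v /= v_le1 <-].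
have v_sq_le1 : vnorm v ^+ 2 <= 1.
  by rewrite -(expr1n R 2) lerXn2r ?nnegrE ?vnorm_ge0.
by have := HF v; have := vnorm_ge0 (A *m v); nra.
Qed.

Lemma vnorm_mulmx_le A v : vnorm (A *m v) <= specnorm A * vnorm v.
Proof.
have [->|v_neq0] := eqVneq v 0; first by rewrite mulmx0 vnorm0 mulr0.
have v_gt0 : 0 < vnorm v by rewrite lt0r vnorm_eq0 v_neq0 vnorm_ge0.
have : vnorm (A *m ((vnorm v)^-1 *: v)) <= specnorm A.
  apply: (sup_upper_bound (specnorm_has_sup A)).
  exists ((vnorm v)^-1 *: v) => //=.
  by rewrite vnormZ ger0_norm ?invr_ge0 ?vnorm_ge0 // mulVf ?gt_eqF.
rewrite -scalemxAr vnormZ ger0_norm ?invr_ge0 ?vnorm_ge0 //.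
by rewrite mulrC ler_pdivrMr.
Qed.

Lemma specnorm_ge0 A : 0 <= specnorm A.
Proof.
apply: le_trans (vnorm_ge0 (A *m 0)) _.
apply: (sup_upper_bound (specnorm_has_sup A)).
by exists 0 => //=; rewrite vnorm0 ler01.
Qed.

Lemma specnorm0 : specnorm (0 : 'M[R]_d) = 0.
Proof.
apply/eqP; rewrite eq_le specnorm_ge0 andbT.
apply: ge_sup; first by case: (specnorm_has_sup 0).
by move=> _ [v _ <-]; rewrite mul0mx vnorm0.
Qed.

Definition distortion A : R := (1 + kappa A ^+ 2) * specnorm (1%:M - A^T *m A).

Lemma distortion_ge0 A : 0 <= distortion A.
Proof. by rewrite mulr_ge0 ?specnorm_ge0 ?addr_ge0 ?sqr_ge0. Qed.

End SpectralNorm.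

Lemma pullback_norm_ineq (R : realFieldType) (n m Y B Iv e : R) :
  0 <= n -> 0 <= m -> 0 <= Y -> 0 <= B -> 0 <= Iv -> 0 <= e ->
  m ^+ 2 <= n * e * Y -> m ^+ 2 <= m * (B * Y) -> m <= B * n -> n <= Iv * m ->
  n ^+ 2 - m ^+ 2 <= e * n ^+ 2 ->
  n <= (1 + (B * Iv) ^+ 2) * e * Y.
Proof.
move=> n0 m0 Y0 B0 Iv0 e0 hmn hmY hmB hnm hnn.
have eY0 : 0 <= e * Y by exact: mulr_ge0.
have [m_eq0|m_neq0] := eqVneq m 0.
  by apply: le_trans hnm _; rewrite m_eq0 mulr0 !mulr_ge0 ?addr_ge0 ?sqr_ge0.
have m_gt0 : 0 < m by rewrite lt0r m_neq0.
have cross : n * m ^+ 2 <= (m ^+ 2 + (B * n) ^+ 2) * e * Y.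
  have [small|big] := lerP (n ^+ 2) (m ^+ 2 + (B * n) ^+ 2).
    by have := ler_wpM2l n0 hmn; have := ler_wpM2r eY0 small; lra.
  (* otherwise e >= 1/2, and AM-GM bounds 2 m (B n) *)
  have e_half : 1 <= 2 * e.
    have n2 : 0 < n ^+ 2 by nra.
    by rewrite -(ler_pM2r n2) mul1r; nra.
  have amgm : 2 * m * (B * n) <= m ^+ 2 + (B * n) ^+ 2.
    by have := sqr_ge0 (m - B * n); rewrite sqrrB; lra.
  have := ler_wpM2l (mulr_ge0 n0 (sqr_ge0 m)) e_half.
  have := ler_wpM2l (mulr_ge0 (mulr_ge0 e0 n0) (ler0n _ 2)) hmY.
  have := ler_wpM2r eY0 amgm; nra.
have Bn_le : (B * n) ^+ 2 <= (B * Iv) ^+ 2 * m ^+ 2.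
  by rewrite -exprMn -mulrA lerXn2r ?nnegrE ?mulr_ge0 ?ler_wpM2l.
rewrite -(ler_pM2r (exprn_gt0 2 m_gt0)); apply: le_trans cross _.
by have := ler_wpM2r eY0 Bn_le; lra.
Qed.

Lemma submx_mulmx_idem (R : fieldType) m d (X : 'M[R]_(m, d)) (P : 'M[R]_d) :
  (X <= P)%MS -> P *m P = P -> X *m P = X.
Proof. by move=> /submxP [D ->] P_idem; rewrite -mulmxA P_idem. Qed.

Lemma Km_proj (R : realType) d (c : R) (P : 'M[R]_d) :
  0 < c -> P^T = P -> P *m P = P -> Km c P = (1 + c)^-1 *: Qm P.
Proof.
move=> c_gt0 P_sym P_idem.
have c1_neq0 : 1 + c != 0 by rewrite gt_eqF // ltr_wpDl.
have Q_idem : Qm P *m Qm P = Qm P.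
  by rewrite /Qm mulmxBl mul1mx mulmxBr mulmx1 P_idem subrr subr0.
have Q_sym : (Qm P)^T = Qm P by rewrite /Qm linearB /= trmx1 P_sym.
have cQ_Q : (c%:M + Qm P) *m Qm P = (1 + c) *: Qm P.
  by rewrite mulmxDl mul_scalar_mx Q_idem scalerDl scale1r addrC.
(* the inverse of c + Q is c^-1 (1 - (1 + c)^-1 Q) *)
have cQ_inv : (c%:M + Qm P) *m (c^-1 *: (1%:M - (1 + c)^-1 *: Qm P)) = 1%:M.
  rewrite -scalemxAr mulmxBr mulmx1 -scalemxAr cQ_Q scalerA mulVf // scale1r.
  by rewrite addrK scale_scalar_mx mulVf ?gt_eqF.
have [cQ_unit _] := mulmx1_unit cQ_inv.
have := mulKmx cQ_unit (Qm P); rewrite cQ_Q -scalemxAr => cQ_invQ.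
by rewrite /Km Q_sym Q_idem -[in RHS]cQ_invQ scalerK.
Qed.

Section PullBack.
Variables (R : realType) (d : nat) (M P P0 : 'M[R]_d).
Hypotheses (M_unit : M \in unitmx) (P_sym : P^T = P) (P_idem : P *m P = P).
Hypotheses (P0_sym : P0^T = P0) (P0_idem : P0 *m P0 = P0).
Hypothesis P0M_P : (P0 *m M^T == P)%MS.
Implicit Types u y : 'cV[R]_d.

Lemma proj_mulmx_fixed u : P0 *m u = u -> P *m (M *m u) = M *m u.
Proof.
have PMP0 : P *m M *m P0 = M *m P0.
  apply: trmx_inj; rewrite !trmx_mul P_sym P0_sym mulmxA submx_mulmx_idem //.
  by case/andP: P0M_P.
by move=> P0u; rewrite -P0u !mulmxA PMP0.
Qed.

Lemma proj_pullback_fixed y :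
  P0 *m (invmx M *m (P *m y)) = invmx M *m (P *m y).
Proof.
have P0MP : P0 *m invmx M *m P = invmx M *m P.
  apply: trmx_inj; rewrite !trmx_mul P_sym P0_sym mulmxA submx_mulmx_idem //.
  case/andP: P0M_P => _ /(submxMr (invmx M)^T).
  by rewrite -mulmxA -trmx_mul mulVmx // trmx1 mulmx1.
by rewrite !mulmxA P0MP.
Qed.

Lemma vnorm_proj_pullback_le y : P0 *m y = 0 ->
  vnorm (invmx M *m (P *m (M *m y))) <= distortion M * vnorm y.
Proof.
move=> P0y; set v := invmx M *m _; set E := 1%:M - M^T *m M.
have P0v : P0 *m v = v by exact: proj_pullback_fixed.
have Mv : M *m v = P *m (M *m y) by rewrite mulKVmx.
have EE x : E *m x = x - M^T *m (M *m x) by rewrite mulmxBl mul1mx mulmxA.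
have v_perp_y : dot v y = 0 by rewrite -P0v dot_mulmxl P0_sym P0y dot0r.
have Mv_sq : vnorm (M *m v) ^+ 2 = dot (M *m v) (M *m y).
  by rewrite vnorm_sq {1}Mv dot_mulmxl P_sym Mv mulmxA P_idem -Mv dotC.
have Mv_sqE : vnorm (M *m v) ^+ 2 = - dot v (E *m y).
  by rewrite Mv_sq dot_mulmxl EE dotBr v_perp_y sub0r opprK.
have v_sqE : vnorm v ^+ 2 - vnorm (M *m v) ^+ 2 = dot v (E *m v).
  by rewrite !vnorm_sq EE dotBr dot_mulmxl.
have v_le : vnorm v <= specnorm (invmx M) * vnorm (M *m v).
  by rewrite -{1}(mulKmx M_unit v) vnorm_mulmx_le.
have Mv_sq_le : vnorm (M *m v) ^+ 2 <= vnorm v * specnorm E * vnorm y.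
  rewrite Mv_sqE -mulrA; apply: le_trans (ler_norm _) _; rewrite normrN.
  apply: le_trans (normr_dot_le _ _) _.
  by rewrite ler_wpM2l ?vnorm_ge0 ?vnorm_mulmx_le.
have Mv_sq_le_My :
    vnorm (M *m v) ^+ 2 <= vnorm (M *m v) * (specnorm M * vnorm y).
  rewrite Mv_sq; apply: le_trans (cauchy_schwarz _ _) _.
  by rewrite ler_wpM2l ?vnorm_ge0 ?vnorm_mulmx_le.
have v_sq_le : vnorm v ^+ 2 - vnorm (M *m v) ^+ 2 <= specnorm E * vnorm v ^+ 2.
  rewrite v_sqE; apply: le_trans (cauchy_schwarz _ _) _.
  by rewrite expr2 mulrCA ler_wpM2l ?vnorm_ge0 ?vnorm_mulmx_le.
exact: (pullback_norm_ineq (vnorm_ge0 _) (vnorm_ge0 _) (vnorm_ge0 _)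
  (specnorm_ge0 _) (specnorm_ge0 _) (specnorm_ge0 _) Mv_sq_le Mv_sq_le_My
  (vnorm_mulmx_le _ _) v_le v_sq_le).
Qed.

End PullBack.

Section Dynamics.
Variables (R : realType) (d T : nat) (c : R) (Z P theta : nat -> 'M[R]_d).
Variables x0 z : 'cV[R]_d.
Hypothesis c_gt0 : 0 < c.
Hypothesis P_proj : forall t, (t <= T)%N -> is_orth_proj (P t) (Z t).
Hypothesis theta_transport : forall t, (t < T)%N ->
  theta t \in unitmx /\ (Z t *m (theta t)^T == Z t.+1)%MS.
Hypothesis x0_tangent : (x0^T <= Z 0)%MS.

Definition alpha := c / (1 + c).
Definition zpar := P 0 *m z.
Definition zperp := z - P 0 *m z.

Definition leak s :=
  invmx (thetabar theta s) *m (P s *m (thetabar theta s *m zperp)).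

Fixpoint drift t :=
  if t is s.+1 then drift s + ((1 - alpha) * alpha ^+ s) *: leak s else 0.

Lemma P_sym t : (t <= T)%N -> (P t)^T = P t.
Proof. by case/P_proj. Qed.

Lemma P_idem t : (t <= T)%N -> P t *m P t = P t.
Proof. by case/P_proj=> _ []. Qed.

Lemma P_eqmx_Z t : (t <= T)%N -> (P t == Z t)%MS.
Proof. by case/P_proj=> _ []. Qed.

Lemma thetabar_unit t : (t <= T)%N -> thetabar theta t \in unitmx.
Proof.
elim: t => [|t IH] tT /=; first exact: unitmx1.
by rewrite unitmx_mul (theta_transport tT).1 IH // ltnW.
Qed.

Lemma proj_thetabar t : (t <= T)%N -> (P 0 *m (thetabar theta t)^T == P t)%MS.
Proof.
elim: t => [|t IH] tT /=; first by rewrite trmx1 mulmx1 submx_refl.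
have tT' := ltnW tT.
apply/eqmxP; rewrite trmx_mul mulmxA.
apply: eqmx_trans (eqmxMr _ (eqmxP (IH tT'))) _.
apply: eqmx_trans (eqmxMr _ (eqmxP (P_eqmx_Z tT'))) _.
apply: eqmx_trans (eqmxP (theta_transport tT).2) _.
exact/eqmx_sym/eqmxP/P_eqmx_Z.
Qed.

Lemma xtraj_tangent t : (t <= T)%N -> ((xtraj theta x0 t)^T <= Z t)%MS.
Proof.
elim: t => [|t IH] tT //=; rewrite trmx_mul.
apply: submx_trans (submxMr _ (IH (ltnW tT))) _.
by case/andP: (theta_transport tT).2.
Qed.

Lemma proj_xtraj t : (t <= T)%N -> P t *m xtraj theta x0 t = xtraj theta x0 t.
Proof.
move=> tT; apply: trmx_inj.
rewrite trmx_mul P_sym // submx_mulmx_idem ?P_idem //.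
by apply: submx_trans (xtraj_tangent tT) _; case/andP: (P_eqmx_Z tT).
Qed.

Lemma proj_zpar : P 0 *m zpar = zpar.
Proof. by rewrite /zpar mulmxA P_idem. Qed.

Lemma proj_zperp : P 0 *m zperp = 0.
Proof. by rewrite /zperp mulmxBr proj_zpar subrr. Qed.

Lemma alpha_ge0 : 0 <= alpha.
Proof. by rewrite /alpha divr_ge0 ?addr_ge0 ?ltW. Qed.

Lemma alpha_le1 : alpha <= 1.
Proof. by rewrite /alpha ler_pdivrMr ?ltr_wpDl // mul1r lerDr. Qed.

Lemma feedbackE t : (t <= T)%N ->
  1%:M - Km c (P t) = alpha *: 1%:M + (1 - alpha) *: P t.
Proof.
move=> tT; have c1_neq0 : 1 + c != 0 by rewrite gt_eqF // ltr_wpDl.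
rewrite Km_proj ?P_sym ?P_idem // /Qm /alpha.
by apply/matrixP => i j; rewrite !mxE; field.
Qed.

Lemma leak0 : leak 0 = 0.
Proof. by rewrite /leak /= invmx1 !mul1mx proj_zperp. Qed.

Lemma proj_leak s : (s <= T)%N -> P 0 *m leak s = leak s.
Proof.
move=> sT; apply: proj_pullback_fixed;
  by rewrite ?thetabar_unit ?P_sym ?P_idem ?proj_thetabar.
Qed.

Lemma drift_tangent t : (t <= T)%N -> P 0 *m drift t = drift t.
Proof.
elim: t => [|t IH] tT /=; first by rewrite mulmx0.
by rewrite mulmxDr -scalemxAr IH ?proj_leak // ltnW.
Qed.

Lemma error_decomposition t : (t <= T)%N ->
  qtraj c theta P x0 z t - xtraj theta x0 t =
  thetabar theta t *m (zpar + alpha ^+ t *: zperp + drift t).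
Proof.
elim: t => [|t IH] tT.
  by rewrite /= mul1mx expr0 scale1r addr0 /zpar /zperp addrAC subrr add0r
    addrC subrK.
have tT' := ltnW tT.
set M := thetabar theta t.
have M_fix (w : 'cV[R]_d) : P 0 *m w = w -> P t *m (M *m w) = M *m w.
  by apply: proj_mulmx_fixed; rewrite ?P_sym ?P_idem ?proj_thetabar.
have feedback_x : (1%:M - Km c (P t)) *m xtraj theta x0 t = xtraj theta x0 t.
  rewrite feedbackE // mulmxDl -!scalemxAl !mul1mx proj_xtraj //.
  by rewrite -scalerDl addrC subrK scale1r.
have P_Mu : P t *m (M *m (zpar + alpha ^+ t *: zperp + drift t)) =
    M *m (zpar + alpha ^+ t *: leak t + drift t).
  rewrite !mulmxDr -!scalemxAr (M_fix _ proj_zpar).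
  rewrite (M_fix _ (drift_tangent tT')).
  by rewrite /leak mulKVmx ?thetabar_unit.
rewrite /= -[in X in _ - X]feedback_x -!mulmxBr IH // -/M feedbackE //.
rewrite mulmxDl -!scalemxAl mul1mx P_Mu -mulmxA; congr (_ *m _).
have combine (a b l w : 'cV[R]_d) :
    a + alpha ^+ t.+1 *: b + (w + ((1 - alpha) * alpha ^+ t) *: l) =
    alpha *: (a + alpha ^+ t *: b + w) +
      (1 - alpha) *: (a + alpha ^+ t *: l + w).
  by apply/matrixP => i j; rewrite !mxE exprS; ring.
by rewrite combine [RHS]mulmxDr -!scalemxAr.
Qed.

Lemma distortion_le_gamma s t : (s <= t)%N ->
  distortion (thetabar theta s) <= gamma theta t.
Proof.
move=> st; pose F (i : 'I_t.+1) := distortion (thetabar theta i).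
exact: (le_bigmax 0 F (Ordinal (st : (s < t.+1)%N))).
Qed.

Lemma vnorm_zpar_zperp a :
  vnorm (zpar + a *: zperp) ^+ 2 = vnorm zpar ^+ 2 + a ^+ 2 * vnorm zperp ^+ 2.
Proof.
have zpar_perp : dot zpar zperp = 0.
  by rewrite -proj_zpar dot_mulmxl P_sym // proj_zperp dot0r.
rewrite vnorm_sq dotDl !dotDr !dotZl !dotZr (dotC zperp) zpar_perp -!vnorm_sq.
by ring.
Qed.

Lemma vnorm_z_sq : vnorm z ^+ 2 = vnorm zpar ^+ 2 + vnorm zperp ^+ 2.
Proof.
rewrite -[in LHS](subrK zpar z) addrC -[z - _]scale1r vnorm_zpar_zperp.
by rewrite expr1n mul1r.
Qed.

Lemma vnorm_zperp_le : vnorm zperp <= vnorm z.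
Proof.
rewrite -(ler_pXn2r (n := 2)) ?nnegrE ?vnorm_ge0 // vnorm_z_sq lerDr.
exact: sqr_ge0.
Qed.

Lemma vnorm_leak_le_distortion s : (s <= T)%N ->
  vnorm (leak s) <= distortion (thetabar theta s) * vnorm zperp.
Proof.
move=> sT; apply: (vnorm_proj_pullback_le (P0 := P 0)) proj_zperp;
  by rewrite ?thetabar_unit ?P_sym ?P_idem ?proj_thetabar.
Qed.

Lemma vnorm_leak_le s t : (s <= t)%N -> (t <= T)%N ->
  vnorm (leak s) <= gamma theta t * vnorm z.
Proof.
move=> st tT; apply: le_trans (vnorm_leak_le_distortion (leq_trans st tT)) _.
by rewrite ler_pM ?distortion_ge0 ?vnorm_ge0 ?distortion_le_gamma
  ?vnorm_zperp_le.
Qed.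

Lemma vnorm_drift_le t D : (forall s, (s <= t)%N -> vnorm (leak s) <= D) ->
  vnorm (drift t.+1) <= D * (alpha - alpha ^+ t.+1).
Proof.
elim: t => [|t IH] leak_le.
  by rewrite /= leak0 scaler0 addr0 vnorm0 expr1 subrr mulr0.
have := IH (fun s st => leak_le s (leqW st)).
have k_ge0 : 0 <= (1 - alpha) * alpha ^+ t.+1.
  by rewrite mulr_ge0 ?exprn_ge0 ?alpha_ge0 ?subr_ge0 ?alpha_le1.
have := ler_wpM2l k_ge0 (leak_le t.+1 (leqnn _)).
rewrite /= -/(drift t.+1) [alpha ^+ t.+2]exprS.
have := vnormD_le (drift t.+1) (((1 - alpha) * alpha ^+ t.+1) *: leak t.+1).
rewrite vnormZ ger0_norm //; lra.
Qed.

Lemma thetabar_orthogonal :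
  (forall t, (t < T)%N -> (theta t)^T *m theta t = 1%:M) ->
  forall t, (t <= T)%N -> (thetabar theta t)^T *m thetabar theta t = 1%:M.
Proof.
move=> theta_orth; elim=> [|t IH] tT /=; first by rewrite trmx1 mulmx1.
rewrite trmx_mul -mulmxA (mulmxA (theta t)^T) theta_orth // mul1mx.
by rewrite IH // ltnW.
Qed.

Lemma drift_orthogonal :
  (forall t, (t < T)%N -> (theta t)^T *m theta t = 1%:M) ->
  forall t, (t <= T)%N -> drift t = 0.
Proof.
move=> theta_orth; elim=> [|t IH] tT //=; have tT' := ltnW tT.
have leak_eq0 : leak t = 0.
  apply/eqP; rewrite -vnorm_eq0 eq_le vnorm_ge0 andbT.
  apply: le_trans (vnorm_leak_le_distortion tT') _.
  by rewrite /distortion thetabar_orthogonal // subrr specnorm0 !mulr0 mul0r.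
by rewrite leak_eq0 scaler0 addr0 IH.
Qed.

Lemma error_sq_le t : (1 <= t <= T)%N ->
  vnorm (qtraj c theta P x0 z t - xtraj theta x0 t) ^+ 2 <=
  specnorm (thetabar theta t) ^+ 2 *
    (alpha ^+ (2 * t) * vnorm zperp ^+ 2 + vnorm zpar ^+ 2
     + gamma theta t * vnorm z ^+ 2 *
       (gamma theta t * alpha ^+ 2 * (1 - alpha ^+ t.-1) ^+ 2
        + 2 * (alpha - alpha ^+ t))).
Proof.
case: t => // t /andP [_ tT]; rewrite error_decomposition //=.
set p := zpar + _; set w := drift t.+1; set M := thetabar theta t.+1.
set W := gamma theta t.+1 * vnorm z * (alpha - alpha ^+ t.+1).
have p_sq :
  vnorm p ^+ 2 = alpha ^+ (2 * t.+1) * vnorm zperp ^+ 2 + vnorm zpar ^+ 2.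
  by rewrite vnorm_zpar_zperp mulnC exprM addrC.
have p_le : vnorm p <= vnorm z.
  rewrite -(ler_pXn2r (n := 2)) ?nnegrE ?vnorm_ge0 //.
  rewrite vnorm_zpar_zperp vnorm_z_sq lerD2l ler_piMl ?sqr_ge0 //.
  rewrite exprn_ile1 ?exprn_ge0 ?exprn_ile1 //;
    by rewrite ?alpha_ge0 ?alpha_le1.
have w_le : vnorm w <= W.
  by apply: vnorm_drift_le => s st; apply: vnorm_leak_le (leqW st) tT.
have W_ge0 : 0 <= W := le_trans (vnorm_ge0 _) w_le.
apply: (@le_trans _ _ ((specnorm M * (vnorm p + vnorm w)) ^+ 2)).
  rewrite lerXn2r ?nnegrE ?mulr_ge0 ?addr_ge0 ?specnorm_ge0 ?vnorm_ge0 //.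
  apply: le_trans (vnorm_mulmx_le _ _) _.
  by rewrite ler_wpM2l ?specnorm_ge0 ?vnormD_le.
rewrite exprMn ler_wpM2l ?sqr_ge0 // -p_sq.
have -> : gamma theta t.+1 * vnorm z ^+ 2 * (gamma theta t.+1 * alpha ^+ 2 *
    (1 - alpha ^+ t) ^+ 2 + 2 * (alpha - alpha ^+ t.+1)) =
    2 * vnorm z * W + W ^+ 2.
  by rewrite /W [alpha ^+ t.+1]exprS; ring.
have pw_le := ler_pM (vnorm_ge0 p) (vnorm_ge0 _) p_le w_le.
have w_sq : vnorm w ^+ 2 <= W ^+ 2 by rewrite lerXn2r ?nnegrE ?vnorm_ge0.
by rewrite sqrrD; lra.
Qed.

Lemma error_sq_orthogonal :
  (forall t, (t < T)%N -> (theta t)^T *m theta t = 1%:M) ->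
  forall t, (t <= T)%N ->
  vnorm (qtraj c theta P x0 z t - xtraj theta x0 t) ^+ 2 =
  alpha ^+ (2 * t) * vnorm zperp ^+ 2 + vnorm zpar ^+ 2.
Proof.
move=> theta_orth t tT.
rewrite error_decomposition // drift_orthogonal // addr0 vnorm_sq dot_mulmxl.
rewrite mulmxA thetabar_orthogonal // mul1mx -vnorm_sq vnorm_zpar_zperp.
by rewrite mulnC exprM addrC.
Qed.

End Dynamics.

Theorem theorem1 (R : realType) (r d T : nat) (c : R)
  (Z P theta : nat -> 'M[R]_d) (x0 z : 'cV[R]_d) :
  (1 <= r)%N -> (r <= d)%N -> (1 <= T)%N -> 0 < c ->
  (forall t, (t <= T)%N -> \rank (Z t) = r /\ is_orth_proj (P t) (Z t)) ->
  (forall t, (t < T)%N ->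
     theta t \in unitmx /\ (Z t *m (theta t)^T == Z t.+1)%MS) ->
  (x0^T <= Z 0)%MS ->
  let alpha := c / (1 + c) in
  let zpar := P 0 *m z in
  let zperp := z - P 0 *m z in
  (forall t, (1 <= t <= T)%N ->
     vnorm (qtraj c theta P x0 z t - xtraj theta x0 t) ^+ 2 <=
     specnorm (thetabar theta t) ^+ 2 *
       (alpha ^+ (2 * t) * vnorm zperp ^+ 2 + vnorm zpar ^+ 2
        + gamma theta t * vnorm z ^+ 2 *
          (gamma theta t * alpha ^+ 2 * (1 - alpha ^+ t.-1) ^+ 2
           + 2 * (alpha - alpha ^+ t))))
  /\
  ((forall t, (t < T)%N -> (theta t)^T *m theta t = 1%:M) ->
   forall t, (1 <= t <= T)%N ->
     vnorm (qtraj c theta P x0 z t - xtraj theta x0 t) ^+ 2 =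
     alpha ^+ (2 * t) * vnorm zperp ^+ 2 + vnorm zpar ^+ 2).
Proof.
move=> _ _ _ c_gt0 ZP theta_transport x0_tangent alpha zpar zperp.
have P_proj t : (t <= T)%N -> is_orth_proj (P t) (Z t) by case/ZP.
split=> [t|theta_orth t /andP [_ tT]].
  exact: (error_sq_le z c_gt0 P_proj theta_transport x0_tangent).
exact: (error_sq_orthogonal z c_gt0 P_proj theta_transport x0_tangent
  theta_orth tT).
Qed.
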